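(* Let $G=(V,E)$ be a computation graph whose vertices $v$ carry local types $\mathcal T_v$, and such that for each non-source vertex $v$ the associated function $f_v:\prod_{(u,v)\in E}\mathcal T_u\to\mathcal T_v$ is representable in $\mathrm{ResMLP}(d_v,L_v)$; for a source vertex $v$ put $d_v=d_{\mathcal T_v}$ and $L_v=0$. Then the function induced by $G$, from the product of the types of the source vertices to the product of the types of the sink vertices, is representable in $\mathrm{ResMLP}\big(\sum_{v\in V}d_v,\ \mathrm{depth}(G)\,(\max_{v\in V}L_v+1)+1\big)$.
   Context: A local type $\mathcal T$ is a finite set $S$ with an injective encoding $\phi_{\mathcal T}:S\to\mathbb{R}^{d_{\mathcal T}}$; product types are encoded by concatenation. A computation graph is a finite directed acyclic graph $G=(V,E)$ where each vertex $v$ has a local type $\mathcal T_v$ and each vertex with at least one incoming edge has a function $f_v$ from the product (in a fixed order) of the types of its in-neighbours to $\mathcal T_v$. Source vertices have no incoming edges, sink vertices no outgoing edges. The induced function assigns the inputs to the sources and, once all in-neighbours of $v$ have values $x_{u}$, assigns $v$ the value $f_v((x_u)_u)$; its output is the tuple of values at the sinks. $\mathrm{depth}(G)$ is the number of edges of a longest directed path in $G$. A single-layer fully connected network of dimension $d$ is $f_{\mathrm{fcn}}(X)=W_2\,\mathrm{ReLU}(W_1X+B_1)+B_2$ with $W_1\in\mathbb{R}^{4d\times d}$, $B_1\in\mathbb{R}^{4d}$, $W_2\in\mathbb{R}^{d\times 4d}$, $B_2\in\mathbb{R}^d$. $\mathrm{ResMLP}(d,L)$ is the set of maps $X\mapsto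 X^{(L)}$ with $X^{(0)}=X$, $X^{(l)}=X^{(l-1)}+f^{(l)}_{\mathrm{fcn}}(X^{(l-1)})$. A function $f:\mathcal A\to\mathcal B$ between local types is representable in $\mathrm{ResMLP}(d,L)$ (with $d\ge\max(d_{\mathcal A},d_{\mathcal B})$) if there is $\tilde f\in\mathrm{ResMLP}(d,L)$ with $\iota_1\circ\phi_{\mathcal B}\circ f=\tilde f\circ\iota_2\circ\phi_{\mathcal A}$, where $\iota_1,\iota_2$ pad with zeros into $\mathbb{R}^d$. *)

From HB Require Import structures.
From mathcomp Require Import all_boot all_order all_algebra.
From mathcomp Require Import reals.
Set Implicit Arguments. Unset Strict Implicit. Unset Printing Implicit Defensive.
Import Order.TTheory GRing.Theory Num.Theory.
Local Open Scope ring_scope.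

Section Defs.
Variable R : realType.

Record LocalType := {
  lt_car : finType;
  lt_dim : nat;
  lt_enc : lt_car -> 'cV[R]_lt_dim;
  lt_enc_inj : injective lt_enc }.

Definition pad (d n : nat) (v : 'cV[R]_n) : 'cV[R]_d :=
  \col_(i < d) (match (insub (val i) : option 'I_n) with
                | Some j => v j 0 | None => 0 end).

Definition relu (d : nat) (X : 'cV[R]_d) : 'cV[R]_d := map_mx (fun x => Num.max x 0) X.

Record FCN (d : nat) := {
  W1 : 'M[R]_(4 * d, d);
  B1 : 'cV[R]_(4 * d);
  W2 : 'M[R]_(d, 4 * d);
  B2 : 'cV[R]_d }.

Definition fcn (d : nat) (p : FCN d) (X : 'cV[R]_d) : 'cV[R]_d :=
  W2 p *m relu (W1 p *m X + B1 p) + B2 p.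

Definition resmlp (d : nat) (ls : seq (FCN d)) (X : 'cV[R]_d) : 'cV[R]_d :=
  foldl (fun Y p => Y + fcn p Y) X ls.

Definition ResMLP (d L : nat) (g : 'cV[R]_d -> 'cV[R]_d) : Prop :=
  exists ls : seq (FCN d), size ls = L /\ forall X, g X = resmlp ls X.

Definition representable (X : Type) (P : X -> Prop) (dA dB : nat)
    (encA : X -> 'cV[R]_dA) (encB : X -> 'cV[R]_dB) (d L : nat) : Prop :=
  (dA <= d)%N /\ (dB <= d)%N /\
  exists g : 'cV[R]_d -> 'cV[R]_d, @ResMLP d L g /\
    forall x, P x -> pad d (encB x) = g (pad d (encA x)).

(* The graph on V is given by the ordered lists of in-neighbours preds v;
   the edge (u,v) is present iff u \in preds v. *)
Section Graph.
Variable V : finType.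
Variable preds : V -> seq V.

Definition edge : rel V := fun u v => u \in preds v.

Definition acyclic : Prop := forall u v, edge u v -> ~~ connect edge v u.

Definition is_source (v : V) : bool := preds v == [::].
Definition is_sink (v : V) : bool := [forall w, v \notin preds w].

(* longest directed path: number of edges; path x t has size t edges.
   In a DAG every path has < #|V| edges. *)
Definition depth : nat :=
  \max_(n < #|V|.+1 | [exists x : V, [exists t : n.-tuple V, path edge x t]]) n.

Variable T : V -> LocalType.

Fixpoint dims (s : seq V) : nat :=
  match s with [::] => 0%N | u :: s' => (lt_dim (T u) + dims s')%N end.

Fixpoint encs (s : seq V) (x : forall u, lt_car (T u)) : 'cV[R]_(dims s) :=
  match s return 'cV[R]_(dims s) with
  | [::] => 0
  | u :: s' => col_mx (lt_enc (x u)) (encs s' x)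
  end.

Definition local (v : V) (g : (forall u, lt_car (T u)) -> lt_car (T v)) : Prop :=
  forall x y, (forall u, u \in preds v -> x u = y u) -> g x = g y.

(* a full assignment of values consistent with the graph functions:
   exactly the assignments produced by the induced function from
   their source values *)
Definition run (f : forall v, (forall u, lt_car (T u)) -> lt_car (T v))
    (a : forall u, lt_car (T u)) : Prop :=
  forall v, ~~ is_source v -> a v = f v a.

End Graph.
End Defs.

From HB Require Import structures.
From mathcomp Require Import all_boot all_order all_algebra zify.
From mathcomp Require Import reals.
Import Order.TTheory GRing.Theory Num.Theory.
Local Open Scope ring_scope.
Set Implicit Arguments. Unset Strict Implicit. Unset Printing Implicit Defensive.

(* Simulate G in R^(sum_v d_v), with one block of d_v coordinates per vertex.
   Since relu x - relu (-x) = x, a single residual layer realizes any linear map,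
   and a block-diagonal layer runs one layer of every vertex network in parallel.
   A stage consists of a linear layer writing into the block of each non-source
   vertex the concatenated encodings of its in-neighbours, followed by
   max_v L_v parallel layers (shorter networks padded by zero layers).  A stage
   turns correct in-neighbour blocks into a correct block, so after depth(G)
   stages every block holds the encoding of its value; a last linear layer
   gathers the sinks.  The initial placement of the sources is a linear map,
   folded into the first linear layer. *)

Section Coordinates.
Variable R : realType.

Definition cvnth n (v : 'cV[R]_n) (k : nat) : R :=
  if insub k is Some j then v j 0 else 0.

Lemma pad_entry d n (v : 'cV[R]_n) i : pad d v i 0 = cvnth v i.
Proof. by rewrite mxE. Qed.

Lemma cvnth0 n k : cvnth (0 : 'cV[R]_n) k = 0.
Proof. by rewrite /cvnth; case: insubP => // j _ _; rewrite mxE. Qed.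

Lemma cvnth_pad d n (v : 'cV[R]_n) k : (n <= d)%N -> cvnth (pad d v) k = cvnth v k.
Proof.
move=> le_nd; rewrite /cvnth; case: insubP => [i _ <-|kd]; first exact: pad_entry.
case: insubP => // j _ jk; move: kd; rewrite -jk.
by rewrite (leq_trans (ltn_ord j) le_nd).
Qed.

Lemma cvnth_col_mx m n (A : 'cV[R]_m) (B : 'cV[R]_n) k :
  cvnth (col_mx A B) k = if (k < m)%N then cvnth A k else cvnth B (k - m).
Proof.
rewrite /cvnth; case: ifP => lt_km.
  case: insubP => [i _ ik|]; last by rewrite ltn_addr.
  case: insubP => [j _ jk|]; last by rewrite lt_km.
  have -> : i = lshift n j by apply: val_inj; rewrite /= ik jk.
  by rewrite col_mxEu.
have le_mk : (m <= k)%N by rewrite leqNgt lt_km.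
case: insubP => [i _ ik|lt_kmn].
  case: insubP => [j _ jk|]; last by rewrite ltn_subLR // -ik ltn_ord.
  have -> : i = rshift m j by apply: val_inj => /=; rewrite jk subnKC.
  by rewrite col_mxEd.
by case: insubP => // j _ jk; rewrite -(subnKC le_mk) -jk ltn_add2l ltn_ord in lt_kmn.
Qed.

Lemma sum_eq_cvnth n (v : 'cV[R]_n) k :
  \sum_(i : 'I_n) (val i == k)%:R * v i 0 = cvnth v k.
Proof.
rewrite /cvnth; case: insubP => [j _ <-|kn].
  rewrite (bigD1 j) //= eqxx mul1r big1 ?addr0 // => i ne_ij.
  by rewrite val_eqE (negbTE ne_ij) mul0r.
apply: big1 => i _; case: eqP => [ik|_]; last exact: mul0r.
by rewrite -ik ltn_ord in kn.
Qed.

Lemma max0_subN (x : R) : Num.max x 0 - Num.max (- x) 0 = x.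
Proof.
rewrite /Num.max oppr_lt0.
by case: ltrgtP => [||->]; rewrite ?subr0 ?sub0r ?opprK ?oppr0.
Qed.

End Coordinates.

Section ResidualNetworks.
Variables (R : realType) (n : nat).

Definition zero_layer : FCN R n := {| W1 := 0; B1 := 0; W2 := 0; B2 := 0 |}.

Lemma fcn_zero_layer (X : 'cV[R]_n) : fcn zero_layer X = 0.
Proof. by rewrite /fcn /= mul0mx addr0. Qed.

Lemma resmlp_cat (ls1 ls2 : seq (FCN R n)) X :
  resmlp (ls1 ++ ls2) X = resmlp ls2 (resmlp ls1 X).
Proof. exact: foldl_cat. Qed.

Lemma resmlp_behead (ls : seq (FCN R n)) X :
  resmlp (behead ls) (resmlp [:: head zero_layer ls] X) = resmlp ls X.
Proof. by case: ls => //=; rewrite fcn_zero_layer addr0. Qed.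

End ResidualNetworks.

Section WeightedLayers.
Variables (R : realType) (D : nat) (S H : finType).
Hypotheses (cardS : #|S| = D) (cardH : #|H| = (4 * D)%N).

Definition ordS (s : S) : 'I_D := cast_ord cardS (enum_rank s).
Definition unordS (i : 'I_D) : S := enum_val (cast_ord (esym cardS) i).
Definition unordH (i : 'I_(4 * D)) : H := enum_val (cast_ord (esym cardH) i).

Lemma ordSK : cancel ordS unordS.
Proof. by move=> s; rewrite /ordS /unordS cast_ordK enum_rankK. Qed.

Lemma unordSK : cancel unordS ordS.
Proof. by move=> i; rewrite /ordS /unordS enum_valK cast_ordKV. Qed.

Lemma unordH_bij : bijective unordH.
Proof.
exists (fun h => cast_ord cardH (enum_rank h)) => i; rewrite /unordH.
  by rewrite enum_valK cast_ordKV.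
by rewrite cast_ordK enum_rankK.
Qed.

Lemma reindex_ordS (F : 'I_D -> R) : \sum_(i : 'I_D) F i = \sum_(s : S) F (ordS s).
Proof. by apply: reindex; exists unordS => ?; rewrite (ordSK, unordSK). Qed.

Lemma sum_ordS_eq_cvnth (X : 'cV[R]_D) k :
  \sum_(s : S) (val (ordS s) == k)%:R * X (ordS s) 0 = cvnth X k.
Proof. by rewrite -(reindex_ordS (fun i => (val i == k)%:R * X i 0)) sum_eq_cvnth. Qed.

Variables (w1 : H -> S -> R) (b1 : H -> R) (w2 : S -> H -> R) (b2 : S -> R).

Definition weighted_layer : FCN R D :=
  {| W1 := \matrix_(h, j) w1 (unordH h) (unordS j); B1 := \col_h b1 (unordH h);
     W2 := \matrix_(i, h) w2 (unordS i) (unordH h); B2 := \col_i b2 (unordS i) |}.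

Lemma weighted_layerE X s : fcn weighted_layer X (ordS s) 0 =
  \sum_(h : H) w2 s h * Num.max (\sum_(t : S) w1 h t * X (ordS t) 0 + b1 h) 0 + b2 s.
Proof.
rewrite /fcn /relu /= !mxE ordSK; congr (_ + _).
rewrite (reindex unordH) /=; last exact/onW_bij/unordH_bij.
apply: eq_bigr => h _; rewrite !mxE ordSK reindex_ordS.
by congr (_ * Num.max (_ + _) _); apply: eq_bigr => t _; rewrite !mxE ordSK.
Qed.

End WeightedLayers.

Section LinearLayers.
Variables (R : realType) (D : nat) (S : finType).
Hypothesis cardS : #|S| = D.
Local Notation ordS := (ordS cardS).

Lemma card_linear_hidden : #|{: (S + S) + (S + S)}| = (4 * D)%N.
Proof. by rewrite !card_sum cardS addnn -mul2n addnn -mul2n mulnA. Qed.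

Definition kron (s t : S) : R := (s == t)%:R.

(* The hidden units relu(x_t) and relu(-x_t) reconstruct x = relu(x) - relu(-x),
   so one residual layer realizes an arbitrary linear map. *)
Definition linear_layer (c : S -> S -> R) : FCN R D :=
  weighted_layer cardS card_linear_hidden
    (fun h s => match h with
                | inl (inl t) => kron t s | inl (inr t) => - kron t s | _ => 0 end)
    (fun _ => 0)
    (fun s h => match h with
                | inl (inl t) => c s t - kron s t
                | inl (inr t) => - (c s t - kron s t) | _ => 0 end)
    (fun _ => 0).

Lemma sum_kron (t : S) (F : S -> R) : \sum_(s : S) kron t s * F s = F t.
Proof.
rewrite (bigD1 t) //= /kron eqxx mul1r big1 ?addr0 // => s ne_st.
by rewrite eq_sym (negbTE ne_st) mul0r.
Qed.

Lemma sum_oppkron (t : S) (F : S -> R) : \sum_(s : S) - kron t s * F s = - F t.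
Proof. by rewrite -sum_kron -sumrN; apply: eq_bigr => s _; rewrite mulNr. Qed.

Lemma linear_layerE c X s :
  resmlp [:: linear_layer c] X (ordS s) 0 = \sum_(t : S) c s t * X (ordS t) 0.
Proof.
have sum0 (F : S -> R) : \sum_(t : S) 0 * F t = 0 by apply: big1 => t _; rewrite mul0r.
rewrite /= mxE weighted_layerE !big_sumType /= !sum0 !addr0 -big_split /=.
transitivity (X (ordS s) 0 + \sum_(t : S) (c s t - kron s t) * X (ordS t) 0).
  congr (_ + _); apply: eq_bigr => t _.
  by rewrite sum_kron sum_oppkron !addr0 mulNr -mulrBr max0_subN.
rewrite (eq_bigr (fun t => c s t * X (ordS t) 0 - kron s t * X (ordS t) 0)).
  by rewrite sumrB sum_kron addrC subrK.
by move=> t _; rewrite mulrBl.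
Qed.

Definition comp_coef (c1 c2 : S -> S -> R) (s u : S) : R := \sum_(t : S) c1 s t * c2 t u.

Lemma linear_layer_comp c1 c2 X :
  resmlp [:: linear_layer (comp_coef c1 c2)] X = resmlp [:: linear_layer c2; linear_layer c1] X.
Proof.
apply/matrixP => i j; rewrite (ord1 j) -(unordSK cardS i) linear_layerE.
rewrite -[resmlp [:: _; _] X]/(resmlp [:: linear_layer c1] (resmlp [:: linear_layer c2] X)).
rewrite linear_layerE /comp_coef; under eq_bigr do rewrite mulr_suml.
rewrite exchange_big /=; apply: eq_bigr => t _; rewrite linear_layerE mulr_sumr.
by apply: eq_bigr => u _; rewrite mulrA.
Qed.

End LinearLayers.

Arguments kron {R S} s t.

Section BlockDiagonal.
Variables (R : realType) (V : finType).

Lemma card_tagged_ord (p : V -> nat) : #|{: {v : V & 'I_(p v)}}| = (\sum_(v : V) p v)%N.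
Proof.
rewrite card_tagged sumnE big_map big_enum /=.
by apply: eq_bigr => v _; rewrite card_ord.
Qed.

Lemma sum_tagged (J : V -> finType) (F : {v : V & J v} -> R) :
  \sum_(t : {v : V & J v}) F t = \sum_(v : V) \sum_(j : J v) F (Tagged J j).
Proof.
rewrite (sig_big_dep predT (fun _ => predT) (fun v j => F (Tagged J j))) /=.
by apply: eq_bigr => -[].
Qed.

Definition mxnth m n (A : 'M[R]_(m, n)) (i : 'I_m) (k : nat) : R :=
  if insub k is Some j then A i j else 0.

Variables (m n : V -> nat) (A : forall v, 'M[R]_(m v, n v)).

Definition blockdiag_coef (s : {v : V & 'I_(m v)}) (t : {v : V & 'I_(n v)}) : R :=
  if tag t == tag s then mxnth (A (tag s)) (tagged s) (val (tagged t)) else 0.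

Lemma sum_blockdiag_coef s (F : {v : V & 'I_(n v)} -> R) :
  \sum_t blockdiag_coef s t * F t =
  \sum_(j : 'I_(n (tag s))) A (tag s) (tagged s) j * F (Tagged (fun v => 'I_(n v)) j).
Proof.
rewrite sum_tagged (bigD1 (tag s)) //= [X in _ + X]big1 ?addr0; last first.
  by move=> w ne_ws; apply: big1 => j _; rewrite /blockdiag_coef /= (negbTE ne_ws) mul0r.
by apply: eq_bigr => j _; rewrite /blockdiag_coef /= eqxx /mxnth valK.
Qed.

End BlockDiagonal.

Section Blocks.
Variables (R : realType) (V : finType) (d : V -> nat).
Local Notation D := (\sum_(v : V) d v)%N.
Local Notation ordB := (ordS (card_tagged_ord d)).

Definition block (v : V) (X : 'cV[R]_D) : 'cV[R]_(d v) :=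
  \col_i X (ordB (Tagged (fun w => 'I_(d w)) i)) 0.

Lemma card_par_hidden : #|{: {v : V & 'I_(4 * d v)}}| = (4 * D)%N.
Proof. by rewrite card_tagged_ord big_distrr. Qed.

Definition par_layer (q : forall v, FCN R (d v)) : FCN R D :=
  weighted_layer (card_tagged_ord d) card_par_hidden
    (blockdiag_coef (fun v => W1 (q v))) (fun h => B1 (q (tag h)) (tagged h) 0)
    (blockdiag_coef (fun v => W2 (q v))) (fun s => B2 (q (tag s)) (tagged s) 0).

Lemma block_par_layer q X v :
  block v (resmlp [:: par_layer q] X) = resmlp [:: q v] (block v X).
Proof.
apply/matrixP => i j; rewrite (ord1 j) /= [LHS]mxE [LHS]mxE [RHS]mxE weighted_layerE.
rewrite sum_blockdiag_coef /fcn /relu !mxE /=; congr (_ + (_ + _)).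
apply: eq_bigr => k _; rewrite !mxE sum_blockdiag_coef /=.
by congr (_ * Num.max (_ + _) _); apply: eq_bigr => l _; rewrite !mxE.
Qed.

Fixpoint par_layers (ls : forall v, seq (FCN R (d v))) (n : nat) : seq (FCN R D) :=
  if n is n'.+1 then
    par_layer (fun v => head (zero_layer R (d v)) (ls v)) ::
      par_layers (fun v => behead (ls v)) n'
  else [::].

Lemma size_par_layers ls n : size (par_layers ls n) = n.
Proof. by elim: n ls => //= n IH ls; rewrite IH. Qed.

Lemma block_par_layers ls n X v : (size (ls v) <= n)%N ->
  block v (resmlp (par_layers ls n) X) = resmlp (ls v) (block v X).
Proof.
elim: n ls X => [|n IH] ls X /=; first by case: (ls v).
move=> le_ls_n; rewrite IH ?block_par_layer ?resmlp_behead //.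
by case: (ls v) le_ls_n.
Qed.

End Blocks.

Section Encodings.
Variables (R : realType) (V : finType) (T : V -> LocalType R).

Fixpoint offset (s : seq V) (u : V) : nat :=
  if s is w :: s' then (if w == u then 0 else lt_dim (T w) + offset s' u)%N else 0%N.

Fixpoint locate (s : seq V) (k : nat) : option (V * nat) :=
  if s is w :: s' then
    if (k < lt_dim (T w))%N then Some (w, k) else locate s' (k - lt_dim (T w))
  else None.

Lemma cvnth_encs_offset s a u i : u \in s -> (i < lt_dim (T u))%N ->
  cvnth (encs (T:=T) s a) (offset s u + i) = cvnth (lt_enc (a u)) i.
Proof.
elim: s => //= w s IH; rewrite inE cvnth_col_mx => us lt_iu.
have [->|ne_wu] := eqVneq w u; first by rewrite add0n lt_iu.
rewrite eq_sym (negbTE ne_wu) /= in us.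
by rewrite -addnA ltnNge leq_addr addKn IH.
Qed.

Lemma cvnth_encs_locate s a k : cvnth (encs (T:=T) s a) k =
  if locate s k is Some (u, j) then cvnth (lt_enc (a u)) j else 0.
Proof.
elim: s k => [|w s IH] k /=; first exact: cvnth0.
by rewrite cvnth_col_mx; case: ifP.
Qed.

Lemma locate_mem s k u j : locate s k = Some (u, j) -> u \in s.
Proof.
elim: s k => //= w s IH k; rewrite inE; case: ifP => _ [].
  by move=> -> _; rewrite eqxx.
by move/IH => ->; rewrite orbT.
Qed.

Lemma dims_sum s : dims T s = (\sum_(u <- s) lt_dim (T u))%N.
Proof. by elim: s => [|w s IH]; rewrite ?big_nil ?big_cons //= IH. Qed.

End Encodings.

Section Height.
Variables (V : finType) (preds : V -> seq V).
Local Notation edge := (edge preds).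

Lemma acyclic_path_uniq x t : acyclic preds -> path edge x t -> uniq (x :: t).
Proof.
move=> acyc; elim: t x => //= y t IH x /andP [exy pyt].
rewrite IH // andbT; apply/negP => xyt.
by have := acyc _ _ exy; rewrite (path_connect pyt).
Qed.

Lemma size_path_le_depth x t : acyclic preds -> path edge x t -> (size t <= depth preds)%N.
Proof.
move=> acyc pt; have le_tV : (size t < #|V|.+1)%N.
  rewrite ltnS; apply: ltnW; rewrite -[(size t).+1]/(size (x :: t)).
  by rewrite -(card_uniqP (acyclic_path_uniq acyc pt)) max_card.
apply: (@leq_bigmax_cond _ _ (fun n : 'I_#|V|.+1 => val n) (Ordinal le_tV)).
by apply/existsP; exists x; apply/existsP; exists (in_tuple t).
Qed.

Fixpoint height_leq (k : nat) (v : V) : bool :=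
  if k is k'.+1 then all (height_leq k') (preds v) else is_source preds v.

Lemma source_height_leq k v : is_source preds v -> height_leq k v.
Proof. by case: k => //= k /eqP ->. Qed.

Lemma path_of_not_height_leq k v : ~~ height_leq k v ->
  exists x (t : seq V), [/\ size t = k.+1, path edge x t & last x t = v].
Proof.
elim: k v => [|k IH] v /=.
  rewrite /is_source; case pv: (preds v) => [|u s] // _.
  by exists u, [:: v]; rewrite /= /edge pv mem_head.
case/allPn => u up /IH [x [t [st pt lt]]].
exists x, (rcons t v); rewrite size_rcons st last_rcons rcons_path pt lt.
by split.
Qed.

Lemma height_leq_depth v : acyclic preds -> height_leq (depth preds) v.
Proof.
move=> acyc; apply/negPn/negP => /path_of_not_height_leq [x [t [st pt _]]].
by have := size_path_le_depth acyc pt; rewrite st ltnn.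
Qed.

End Height.

Section Network.
Variables (R : realType) (V : finType) (preds : V -> seq V) (T : V -> LocalType R).
Variables (f : forall v, (forall u, lt_car (T u)) -> lt_car (T v)) (srcs snks : seq V).
Variables (d : V -> nat) (ls : forall v, seq (FCN R (d v))) (M : nat).
Hypothesis acyc : acyclic preds.
Hypothesis uniq_srcs : uniq srcs.
Hypothesis srcsE : forall v, (v \in srcs) = is_source preds v.
Hypothesis dim_le : forall v, (lt_dim (T v) <= d v)%N.
Hypothesis source_dim : forall v, is_source preds v -> d v = lt_dim (T v).
Hypothesis source_ls : forall v, is_source preds v -> ls v = [::].
Hypothesis size_ls : forall v, (size (ls v) <= M)%N.
Hypothesis ls_spec : forall v, ~~ is_source preds v -> forall x,
  pad (d v) (lt_enc (f v x)) = resmlp (ls v) (pad (d v) (encs (preds v) x)).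

Local Notation D := (\sum_(v : V) d v)%N.
Local Notation S := {v : V & 'I_(d v)}.
Local Notation ordB := (ordS (card_tagged_ord d)).
Local Notation lin := (linear_layer (R := R) (card_tagged_ord d)).
Local Notation block := (@block R V d).
Local Notation encs := (encs (T := T)).

Lemma dims_le_sum s : uniq s -> (dims T s <= D)%N.
Proof.
move=> us; rewrite dims_sum (@leq_trans (\sum_(u <- s) d u)) ?leq_sum //.
by rewrite big_uniq // [leqRHS](bigID (mem s)) leq_addr.
Qed.

Definition init_coef (s t : S) : R :=
  if tag s \in srcs then (val (ordB t) == offset T srcs (tag s) + val (tagged s))%:R else 0.

Definition gather_coef (s : seq V) (k : nat) (t : S) : R :=
  if locate T s k is Some (u, j) then ((tag t == u) && (val (tagged t) == j))%:R else 0.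

Definition copy_coef (s t : S) : R :=
  if is_source preds (tag s) then kron s t else gather_coef (preds (tag s)) (val (tagged s)) t.

Definition output_coef (s t : S) : R := gather_coef snks (val (ordB s)) t.

Definition stage : seq (FCN R D) := lin copy_coef :: par_layers ls M.

Definition network (n : nat) : seq (FCN R D) :=
  if n is n'.+1 then
    lin (comp_coef copy_coef init_coef) :: par_layers ls M ++
      flatten (nseq n' stage) ++ [:: lin output_coef]
  else [:: lin (comp_coef output_coef init_coef)].

Lemma size_network n : size (network n) = (n * (M + 1) + 1)%N.
Proof.
case: n => [|n] //=; rewrite !size_cat size_flatten /shape map_nseq /= size_par_layers.
by rewrite sumn_nseq; lia.
Qed.

Lemma resmlp_network n X : resmlp (network n) X =
  resmlp (flatten (nseq n stage) ++ [:: lin output_coef]) (resmlp [:: lin init_coef] X).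
Proof.
rewrite -[RHS]resmlp_cat; case: n => [|n].
  by rewrite -linear_layer_comp.
by rewrite -[network _]/([:: _] ++ _) resmlp_cat linear_layer_comp -resmlp_cat /= catA.
Qed.

Definition encodes (a : forall u, lt_car (T u)) (k : nat) (X : 'cV[R]_D) : Prop :=
  forall v, height_leq preds k v -> block v X = pad (d v) (lt_enc (a v)).

Lemma sum_gather_coef a s k X :
  (forall u, u \in s -> block u X = pad (d u) (lt_enc (a u))) ->
  \sum_(t : S) gather_coef s k t * X (ordB t) 0 = cvnth (encs s a) k.
Proof.
move=> Xs; rewrite cvnth_encs_locate /gather_coef.
case sk: (locate T s k) => [[u j]|]; last by apply: big1 => t _; rewrite mul0r.
rewrite sum_tagged (bigD1 u) //= [X in _ + X]big1 ?addr0 => [|w ne_wu]; last first.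
  by apply: big1 => i _; rewrite (negbTE ne_wu) mul0r.
rewrite -(cvnth_pad _ _ (dim_le u)) -(Xs u (locate_mem sk)) -sum_eq_cvnth.
by apply: eq_bigr => i _; rewrite eqxx mxE.
Qed.

Lemma encodes_init a : encodes a 0 (resmlp [:: lin init_coef] (pad D (encs srcs a))).
Proof.
move=> v /= v_src; apply/matrixP => i j.
rewrite (ord1 j) [LHS]mxE linear_layerE pad_entry /init_coef srcsE v_src sum_ordS_eq_cvnth.
rewrite cvnth_pad ?dims_le_sum // cvnth_encs_offset ?srcsE //=.
by rewrite -source_dim.
Qed.

Lemma block_copy_source X v : is_source preds v ->
  block v (resmlp [:: lin copy_coef] X) = block v X.
Proof.
move=> v_src; apply/matrixP => i j; rewrite (ord1 j) [LHS]mxE linear_layerE [RHS]mxE.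
by rewrite /copy_coef v_src sum_kron.
Qed.

Lemma block_copy a X v : ~~ is_source preds v ->
  (forall u, u \in preds v -> block u X = pad (d u) (lt_enc (a u))) ->
  block v (resmlp [:: lin copy_coef] X) = pad (d v) (encs (preds v) a).
Proof.
move=> v_nsrc Xpreds; apply/matrixP => i j.
rewrite (ord1 j) [LHS]mxE linear_layerE pad_entry /copy_coef (negbTE v_nsrc).
exact: sum_gather_coef.
Qed.

Lemma encodes_stage a k X : run preds f a -> encodes a k X -> encodes a k.+1 (resmlp stage X).
Proof.
move=> run_a Xk v hv.
rewrite -[resmlp stage X]/(resmlp (par_layers ls M) (resmlp [:: lin copy_coef] X)).
rewrite block_par_layers //; have [v_src|v_nsrc] := boolP (is_source preds v).
  by rewrite source_ls // block_copy_source // Xk // source_height_leq.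
rewrite (block_copy (a := a)) // => [|u up]; last exact/Xk/(allP hv).
by rewrite -ls_spec // -run_a.
Qed.

Lemma encodes_stages a n k X : run preds f a -> encodes a k X ->
  encodes a (k + n) (resmlp (flatten (nseq n stage)) X).
Proof.
move=> run_a; elim: n k X => [|n IH] k X Xk; first by rewrite addn0.
by rewrite /= resmlp_cat addnS -addSn; apply/IH/encodes_stage.
Qed.

Lemma output_layer a X : (forall v, block v X = pad (d v) (lt_enc (a v))) ->
  resmlp [:: lin output_coef] X = pad D (encs snks a).
Proof.
move=> Xall; apply/matrixP => i j; rewrite (ord1 j) -(unordSK (card_tagged_ord d) i).
by rewrite linear_layerE pad_entry; apply: sum_gather_coef.
Qed.

Lemma network_correct a : run preds f a ->
  resmlp (network (depth preds)) (pad D (encs srcs a)) = pad D (encs snks a).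
Proof.
move=> run_a; rewrite resmlp_network resmlp_cat; apply: output_layer => v.
have := encodes_stages (n := depth preds) run_a (encodes_init a).
by rewrite add0n; apply; apply: height_leq_depth.
Qed.

End Network.

Unset Implicit Arguments.
Theorem proposition12 (R : realType) (V : finType) (preds : V -> seq V)
  (T : V -> LocalType R)
  (f : forall v, (forall u, lt_car (T u)) -> lt_car (T v))
  (srcs snks : seq V) (d L : V -> nat) :
  (forall v, uniq (preds v)) ->
  acyclic preds ->
  uniq srcs -> (forall v, (v \in srcs) = is_source preds v) ->
  uniq snks -> (forall v, (v \in snks) = is_sink preds v) ->
  (forall v, ~~ is_source preds v -> local preds (f v)) ->
  (forall v, is_source preds v -> d v = lt_dim (T v) /\ L v = 0%N) ->
  (forall v, ~~ is_source preds v ->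
     representable (fun _ => True) (@encs R V T (preds v)) (fun x => lt_enc (f v x))
       (d v) (L v)) ->
  representable (run preds f) (@encs R V T srcs) (@encs R V T snks)
    (\sum_(v : V) d v)%N
    (depth preds * (\max_(v : V) L v + 1) + 1)%N.
Proof.
move=> _ acyc uniq_srcs srcsE uniq_snks _ _ source_dL rep.
have dim_le v : (lt_dim (T v) <= d v)%N.
  have [v_src|v_nsrc] := boolP (is_source preds v).
    by rewrite (source_dL v v_src).1.
  by case: (rep v v_nsrc) => _ [].
have layers_of v : exists l : seq (FCN R (d v)),
    [/\ (size l <= \max_(w : V) L w)%N, is_source preds v -> l = [::] &
        ~~ is_source preds v -> forall x,
          pad (d v) (lt_enc (f v x)) = resmlp l (pad (d v) (encs (preds v) x))].
  have [v_src|v_nsrc] := boolP (is_source preds v); first by exists [::]; split.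
  case: (rep v v_nsrc) => _ [_ [g [[l [size_l gE]] g_spec]]].
  exists l; split=> // [|_ x]; first by rewrite size_l leq_bigmax.
  by rewrite g_spec // gE.
have [ls ls_spec] := fin_all_exists layers_of.
split; first exact: dims_le_sum.
split; first exact: dims_le_sum.
pose layers := network preds T srcs snks ls (\max_(v : V) L v) (depth preds).
exists (resmlp layers); split; first by exists layers; rewrite size_network.
move=> a run_a; symmetry.
apply: (network_correct snks acyc uniq_srcs srcsE dim_le) run_a => v.
- by move/source_dL => [].
- by case: (ls_spec v).
- by case: (ls_spec v).
- by case: (ls_spec v).
Qed.
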